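(* Let $H$ and $G$ be non-abelian simple groups and let $j\colon\mathrm{Aut}(H)\to\mathrm{Aut}(G)$ be an injective homomorphism with $j(\mathrm{Inn}(H))\subseteq\mathrm{Inn}(G)$. Assume $\mathrm{Aut}(G)$ is co-hopfian and $\mathrm{Out}(G)$ is hyperabelian. Let $N=j^{-1}(\mathrm{Inn}(G))$ (a normal subgroup of $\mathrm{Aut}(H)$ containing $\mathrm{Inn}(H)$), let $k\colon\mathrm{Out}(H)\to\mathrm{Out}(G)$ be the homomorphism induced by $j$, and let $\pi\colon\mathrm{Out}(H)=\mathrm{Aut}(H)/\mathrm{Inn}(H)\to\mathrm{Aut}(H)/N$ be the canonical projection. Then $j$ is a localization if and only if the following four conditions hold: (a) for every injective homomorphism $\kappa\colon\mathrm{Aut}(H)\to\mathrm{Aut}(G)$ there exists $\theta\in\mathrm{Aut}(\mathrm{Aut}(G))$ with $\theta\circ j=\kappa$ (i.e. $\mathrm{Aut}(\mathrm{Aut}(G))$ acts transitively, by composition, on the set of monomorphisms $\mathrm{Aut}(H)\to\mathrm{Aut}(G)$); (b) the only $\theta\in\mathrm{Aut}(\mathrm{Aut}(G))$ with $\theta\circ j=j$ is the identity; (c) for every homomorphism $\varphi'\colon\mathrm{Aut}(H)/N\to\mathrm{Aut}(G)$ there exists a unique homomorphism $\psi'\colon\mathrm{Out}(G)\to\mathrm{Aut}(G)$ with $\psi'\circ k=\varphi'\circ\pi$; (d) every homomorphism $\varphi\colon\mathrm{Aut}(H)\to\mathrm{Aut}(G)$ with $\mathrm{Inn}(H)\subseteq\ker\varphi$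 satisfies $N\subseteq\ker\varphi$.
   Context: A group homomorphism $i\colon X\to Y$ is a localization if for every homomorphism $\varphi\colon X\to Y$ there exists a unique homomorphism $\psi\colon Y\to Y$ with $\psi\circ i=\varphi$. A group is co-hopfian if every injective endomorphism is an automorphism. A group $A$ is hyperabelian if every non-trivial quotient of $A$ has a non-trivial abelian normal subgroup. $\mathrm{Out}(X)=\mathrm{Aut}(X)/\mathrm{Inn}(X)$. *)

From Stdlib Require Import Setoid FunctionalExtensionality ProofIrrelevance.

Set Implicit Arguments.

Record Group := {
  carrier :> Type;
  gmul : carrier -> carrier -> carrier;
  ginv : carrier -> carrier;
  gone : carrier;
  gassoc : forall x y z, gmul x (gmul y z) = gmul (gmul x y) z;
  gmul1l : forall x, gmul gone x = x;
  gmulVl : forall x, gmul (ginv x) x = gone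
}.

Arguments gmul {g}.
Arguments ginv {g}.
Arguments gone {g}.

Definition is_hom {X Y : Group} (f : X -> Y) : Prop :=
  forall x y, f (gmul x y) = gmul (f x) (f y).

Definition inj {A B : Type} (f : A -> B) : Prop := forall x y, f x = f y -> x = y.
Definition surj {A B : Type} (f : A -> B) : Prop := forall y, exists x, f x = y.

Definition normal_sub (X : Group) (P : X -> Prop) : Prop :=
  P gone /\ (forall x y, P x -> P y -> P (gmul x y)) /\ (forall x, P x -> P (ginv x)) /\
  (forall g x, P x -> P (gmul (gmul g x) (ginv g))).

Definition nontrivial (X : Group) : Prop := exists x : X, x <> gone.

Definition simple_group (X : Group) : Prop :=
  nontrivial X /\
  forall P, normal_sub X P -> (forall x, P x -> x = gone) \/ (forall x, P x).

Definition nonabelian (X : Group) : Prop := exists x y : X, gmul x y <> gmul y x.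

Definition localization {X Y : Group} (i : X -> Y) : Prop :=
  forall phi : X -> Y, is_hom phi ->
    exists psi : Y -> Y, is_hom psi /\ (forall x, psi (i x) = phi x) /\
      forall psi' : Y -> Y, is_hom psi' -> (forall x, psi' (i x) = phi x) ->
        forall y, psi' y = psi y.

Definition cohopfian (X : Group) : Prop :=
  forall f : X -> X, is_hom f -> inj f -> surj f.

Definition hyperabelian (A : Group) : Prop :=
  forall (B : Group) (p : A -> B), is_hom p -> surj p -> nontrivial B ->
    exists P : B -> Prop, normal_sub B P /\ (exists b, P b /\ b <> gone) /\
      (forall x y, P x -> P y -> gmul x y = gmul y x).

Definition quotient_map {X Q : Group} (q : X -> Q) (N : X -> Prop) : Prop :=
  is_hom q /\ surj q /\ forall x, q x = gone <-> N x.

Section Aut.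
Variable X : Group.

Definition aut_prop (p : (X -> X) * (X -> X)) : Prop :=
  is_hom (fst p) /\ (forall x, snd p (fst p x) = x) /\ (forall x, fst p (snd p x) = x).

Definition aut_car := { p : (X -> X) * (X -> X) | aut_prop p }.

Definition autf (a : aut_car) : X -> X := fst (proj1_sig a).

Lemma aut_eq (a b : aut_car) : (forall x, autf a x = autf b x) -> a = b.
Proof.
  destruct a as [[f g] [hf [gf fg]]], b as [[f' g'] [hf' [gf' fg']]].
  unfold autf; simpl in *. intro E.
  assert (Ef : f = f') by (apply functional_extensionality; exact E).
  subst f'.
  assert (Eg : g = g').
  { apply functional_extensionality; intro x.
    rewrite <- (gf' (g x)). rewrite fg. reflexivity. }
  subst g'.
  f_equal. apply proof_irrelevance.
Qed.

Lemma hom_inv (f g : X -> X) : is_hom f -> (forall x, g (f x) = x) ->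
  (forall x, f (g x) = x) -> is_hom g.
Proof.
  intros hf gf fg x y.
  rewrite <- (fg x) at 1. rewrite <- (fg y) at 1. rewrite <- hf. apply gf.
Qed.

Definition aut_mul (a b : aut_car) : aut_car.
Proof.
  destruct a as [[f g] [hf [gf fg]]], b as [[f' g'] [hf' [gf' fg']]].
  exists (fun x => f (f' x), fun x => g' (g x)).
  split; [|split]; simpl.
  - intros x y. rewrite hf', hf. reflexivity.
  - intro x. rewrite gf, gf'. reflexivity.
  - intro x. rewrite fg', fg. reflexivity.
Defined.

Definition aut_inv (a : aut_car) : aut_car.
Proof.
  destruct a as [[f g] [hf [gf fg]]].
  exists (g, f). split; [|split]; simpl.
  - exact (@hom_inv f g hf gf fg).
  - exact fg.
  - exact gf.
Defined.

Definition aut_one : aut_car.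
Proof.
  exists (fun x => x, fun x => x). split; [|split]; simpl; auto.
  intros x y; reflexivity.
Defined.

Lemma aut_assoc (a b c : aut_car) :
  aut_mul a (aut_mul b c) = aut_mul (aut_mul a b) c.
Proof.
  apply aut_eq; intro x.
  destruct a as [[? ?] [? [? ?]]], b as [[? ?] [? [? ?]]], c as [[? ?] [? [? ?]]].
  reflexivity.
Qed.

Lemma aut_mul1l (a : aut_car) : aut_mul aut_one a = a.
Proof.
  apply aut_eq; intro x. destruct a as [[? ?] [? [? ?]]]. reflexivity.
Qed.

Lemma aut_mulVl (a : aut_car) : aut_mul (aut_inv a) a = aut_one.
Proof.
  apply aut_eq; intro x. destruct a as [[? ?] [? [? ?]]]. unfold autf; simpl. auto.
Qed.

Definition Aut : Group :=
  @Build_Group aut_car aut_mul aut_inv aut_one aut_assoc aut_mul1l aut_mulVl.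

Definition inner (a : Aut) : Prop :=
  exists g : X, forall x, autf a x = gmul (gmul g x) (ginv g).

End Aut.

Arguments autf {X}.
Arguments inner {X}.

(** Every homomorphism [phi : Aut(H) -> Y] either kills [Inn(H)] or is injective:
    for simple [H], a normal subgroup of [Aut(H)] containing a non-trivial element
    contains [Inn(H)], because its commutators with inner automorphisms are
    non-trivial inner automorphisms.  So the localization property of [j] splits
    into two halves.  Fix a non-trivial inner automorphism [a0] of the
    non-abelian group [H].  For injective [phi], an extension [psi] of [phi]
    along [j] is non-trivial on the inner automorphism [j a0], hence injective,
    hence (by co-hopficity) an automorphism of [Aut(G)]: existence and
    uniqueness of [psi] are exactly (a) and (b).  For [phi] killing [Inn(H)], any extension kills
    [j a0], hence [Inn(G)], so it factors through [Out(G)]: existence and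
    uniqueness of the extension then amount to (c) and (d). *)

From Stdlib Require Import Classical ClassicalEpsilon.

Arguments gassoc {g}.
Arguments gmul1l {g}.
Arguments gmulVl {g}.

Section GroupLemmas.
Variable X : Group.
Implicit Types a x y z : X.

Lemma mulgV x : gmul x (ginv x) = gone.
Proof.
  transitivity (gmul (gmul (ginv (ginv x)) (ginv x)) (gmul x (ginv x))).
  - rewrite gmulVl, gmul1l. reflexivity.
  - rewrite <- gassoc, (gassoc (ginv x) x (ginv x)), gmulVl, gmul1l. apply gmulVl.
Qed.

Lemma mulg1 x : gmul x gone = x.
Proof. rewrite <- (gmulVl x), gassoc, mulgV, gmul1l. reflexivity. Qed.

Lemma mulg_cancel_l a x y : gmul a x = gmul a y -> x = y.
Proof.
  intro E. rewrite <- (gmul1l x), <- (gmul1l y), <- (gmulVl a), <- !gassoc, E.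
  reflexivity.
Qed.

Lemma mulg_cancel_r a x y : gmul x a = gmul y a -> x = y.
Proof.
  intro E. rewrite <- (mulg1 x), <- (mulg1 y), <- (mulgV a), !gassoc, E.
  reflexivity.
Qed.

Lemma invg_unique x y : gmul x y = gone -> x = ginv y.
Proof. intro E. apply (mulg_cancel_r y). rewrite gmulVl. exact E. Qed.

Lemma invgK x : ginv (ginv x) = x.
Proof. symmetry. apply invg_unique, mulgV. Qed.

Lemma invMg x y : ginv (gmul x y) = gmul (ginv y) (ginv x).
Proof.
  symmetry. apply invg_unique.
  rewrite <- gassoc, (gassoc (ginv x)), gmulVl, gmul1l. apply gmulVl.
Qed.

Lemma mulKg x y : gmul (ginv x) (gmul x y) = y.
Proof. rewrite gassoc, gmulVl, gmul1l. reflexivity. Qed.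

Lemma mulKVg x y : gmul x (gmul (ginv x) y) = y.
Proof. rewrite gassoc, mulgV, gmul1l. reflexivity. Qed.

End GroupLemmas.

Arguments mulgV {X}.
Arguments mulg1 {X}.
Arguments mulg_cancel_l {X}.
Arguments mulg_cancel_r {X}.
Arguments invg_unique {X}.
Arguments invgK {X}.
Arguments invMg {X}.
Arguments mulKg {X}.
Arguments mulKVg {X}.

Ltac group_simpl :=
  repeat (rewrite <- ?gassoc;
          rewrite ?mulKg, ?mulKVg, ?gmulVl, ?mulgV, ?mulg1, ?gmul1l, ?invgK, ?invMg).

Section Homomorphisms.
Variables X Y : Group.
Variable f : X -> Y.
Hypothesis hf : is_hom f.

Lemma hom_one : f gone = gone.
Proof. apply (mulg_cancel_l (f gone)). rewrite <- hf, gmul1l, mulg1. reflexivity. Qed.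

Lemma hom_inv x : f (ginv x) = ginv (f x).
Proof. apply invg_unique. rewrite <- hf, gmulVl. apply hom_one. Qed.

Lemma hom_inj_of_ker : (forall x, f x = gone -> x = gone) -> inj f.
Proof.
  intros K x y E.
  assert (Exy : f (gmul (ginv x) y) = gone).
  { rewrite hf, hom_inv, E, gmulVl. reflexivity. }
  apply K in Exy. apply (mulg_cancel_l (ginv x)). rewrite Exy, gmulVl. reflexivity.
Qed.

Lemma inj_hom_neq1 x : inj f -> x <> gone -> f x <> gone.
Proof. intros fi xne E. apply xne, fi. rewrite E, hom_one. reflexivity. Qed.

Lemma ker_normal : normal_sub X (fun x => f x = gone).
Proof.
  split; [|split; [|split]].
  - apply hom_one.
  - intros x y A B. rewrite hf, A, B. apply gmul1l.
  - intros x A. rewrite hom_inv, A. symmetry. apply invg_unique, gmul1l.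
  - intros g x A. rewrite !hf, A, mulg1, <- hf, mulgV. apply hom_one.
Qed.

End Homomorphisms.

Arguments hom_one {X Y f}.
Arguments hom_inv {X Y f}.
Arguments hom_inj_of_ker {X Y f}.
Arguments inj_hom_neq1 {X Y f} hf {x}.
Arguments ker_normal {X Y f}.

Lemma quotient_factor {X Q Y : Group} (q : X -> Q) (P : X -> Prop)
  (Hq : quotient_map q P) (f : X -> Y) (hf : is_hom f)
  (hP : forall x, P x -> f x = gone) :
  exists f' : Q -> Y, is_hom f' /\ forall x, f' (q x) = f x.
Proof.
  destruct Hq as [hq [sq kq]].
  assert (wd : forall x x', q x = q x' -> f x = f x').
  { intros x x' E.
    assert (E1 : q (gmul (ginv x) x') = gone).
    { rewrite hq, (hom_inv hq), E, gmulVl. reflexivity. }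
    apply kq, hP in E1. rewrite hf, (hom_inv hf) in E1.
    apply (mulg_cancel_l (ginv (f x))). rewrite E1, gmulVl. reflexivity. }
  pose (sec := fun y => proj1_sig (constructive_indefinite_description _ (sq y))).
  assert (q_sec : forall y, q (sec y) = y).
  { intro y. exact (proj2_sig (constructive_indefinite_description _ (sq y))). }
  exists (fun y => f (sec y)). split.
  - intros y1 y2. rewrite <- hf. apply wd. rewrite hq, !q_sec. reflexivity.
  - intro x. apply wd, q_sec.
Qed.

Arguments quotient_factor {X Q Y q P} Hq {f} hf hP.

Section Automorphisms.
Variable X : Group.
Implicit Types a b : Aut X.

Lemma autf_mul a b x : autf (gmul a b) x = autf a (autf b x).
Proof. destruct a as [[f g] [? [? ?]]], b as [[f' g'] [? [? ?]]]. reflexivity. Qed.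

Lemma autfK a x : autf (ginv a) (autf a x) = x.
Proof. destruct a as [[f g] [? [? ?]]]. unfold autf; simpl in *. auto. Qed.

Lemma autfVK a x : autf a (autf (ginv a) x) = x.
Proof. rewrite <- (invgK a) at 1. apply autfK. Qed.

Lemma autf_hom a : is_hom (autf a).
Proof. destruct a as [p Hp]. exact (proj1 Hp). Qed.

Lemma aut_of_bij_hom (f : X -> X) :
  is_hom f -> inj f -> surj f -> exists th : Aut X, forall x, autf th x = f x.
Proof.
  intros hf fi fs.
  pose (g := fun y => proj1_sig (constructive_indefinite_description _ (fs y))).
  assert (fg : forall y, f (g y) = y).
  { intro y. exact (proj2_sig (constructive_indefinite_description _ (fs y))). }
  assert (pr : aut_prop X (f, g)).
  { split; [exact hf | split; simpl; [intro x; apply fi, fg | exact fg]]. }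
  exists (exist _ _ pr). reflexivity.
Qed.

Lemma conj_aut_prop (g : X) :
  aut_prop X (fun x => gmul (gmul g x) (ginv g), fun x => gmul (gmul (ginv g) x) g).
Proof.
  split; [intros x y | split; intro x]; simpl; group_simpl; reflexivity.
Qed.

Definition conj_aut (g : X) : Aut X := exist _ _ (conj_aut_prop g).

Lemma autf_conj (g x : X) : autf (conj_aut g) x = gmul (gmul g x) (ginv g).
Proof. reflexivity. Qed.

Lemma conj_autM (g h : X) : conj_aut (gmul g h) = gmul (conj_aut g) (conj_aut h).
Proof.
  apply aut_eq. intro x. rewrite autf_mul, !autf_conj. group_simpl. reflexivity.
Qed.

Lemma conj_aut1 : conj_aut gone = gone.
Proof.
  apply aut_eq. intro x. rewrite autf_conj, <- (invg_unique _ _ (gmul1l gone)).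
  group_simpl. reflexivity.
Qed.

Lemma conj_autV (g : X) : conj_aut (ginv g) = ginv (conj_aut g).
Proof. apply invg_unique. rewrite <- conj_autM, gmulVl. apply conj_aut1. Qed.

Lemma inner_conj_aut a : inner a -> exists g, a = conj_aut g.
Proof. intros [g Hg]. exists g. apply aut_eq, Hg. Qed.

Lemma nonabelian_inner_nontrivial :
  nonabelian X -> exists a : Aut X, inner a /\ a <> gone.
Proof.
  intros [x [y Hxy]]. exists (conj_aut x). split; [exists x; reflexivity|].
  intro E. apply Hxy. apply (mulg_cancel_r (ginv x)).
  change (gmul (gmul x y) (ginv x)) with (autf (conj_aut x) y).
  rewrite E. simpl. group_simpl. reflexivity.
Qed.

(* The commutator [conj_aut x, k] is the inner automorphism [conj_aut y] with
   [y = x (k x)^-1], which is non-trivial as soon as [k] moves [x]. *)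
Lemma commutator_conj_aut (x : X) (k : Aut X) :
  gmul (gmul (gmul (conj_aut x) k) (ginv (conj_aut x))) (ginv k)
  = conj_aut (gmul x (ginv (autf k x))).
Proof.
  apply aut_eq; intro z. rewrite <- conj_autV, !autf_mul, !autf_conj.
  pose proof (autf_hom k) as hk.
  rewrite !hk, autfVK, !(hom_inv hk). group_simpl. reflexivity.
Qed.

Lemma normal_aut_contains_inner (K : Aut X -> Prop) (k : Aut X) :
  simple_group X -> normal_sub (Aut X) K -> K k -> k <> gone ->
  forall a, inner a -> K a.
Proof.
  intros [_ HsX] HK Kk kne.
  destruct HK as [K1 [KM [KV KJ]]].
  assert (Hx : exists x, autf k x <> x).
  { apply NNPP; intro Hn; apply kne, aut_eq; intro x.
    apply NNPP; intro; apply Hn; exists x; auto. }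
  destruct Hx as [x Hx].
  pose (P := fun z : X => K (conj_aut z)).
  assert (HP : normal_sub X P).
  { unfold P; split; [|split; [|split]].
    - rewrite conj_aut1. exact K1.
    - intros a b A B. rewrite conj_autM. auto.
    - intros a A. rewrite conj_autV. auto.
    - intros g a A. rewrite !conj_autM, conj_autV. auto. }
  destruct (HsX P HP) as [Ptriv | Pall].
  - exfalso. apply Hx. symmetry. rewrite <- (invgK (autf k x)).
    apply invg_unique, Ptriv. unfold P. rewrite <- commutator_conj_aut. auto.
  - intros a Ha. destruct (inner_conj_aut _ Ha) as [g ->]. apply Pall.
Qed.

Section HomFromAut.
Variable Y : Group.
Variable phi : Aut X -> Y.
Hypothesis hphi : is_hom phi.
Hypothesis HsX : simple_group X.

Lemma hom_aut_kills_inner (k : Aut X) :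
  phi k = gone -> k <> gone -> forall a, inner a -> phi a = gone.
Proof. intros hk kne. exact (normal_aut_contains_inner _ _ HsX (ker_normal hphi) hk kne). Qed.

Lemma hom_aut_inj_of_inner (b : Aut X) : inner b -> phi b <> gone -> inj phi.
Proof.
  intros hb hpb. apply (hom_inj_of_ker hphi). intros x Hx.
  apply NNPP; intro xne. exact (hpb (hom_aut_kills_inner _ Hx xne b hb)).
Qed.

Lemma hom_aut_kills_inner_or_inj :
  (forall a, inner a -> phi a = gone) \/ inj phi.
Proof.
  destruct (classic (exists b, inner b /\ phi b <> gone)) as [[b [hb hpb]] | Hn].
  - right. exact (hom_aut_inj_of_inner b hb hpb).
  - left. intros b hb. apply NNPP; intro. apply Hn. eauto.
Qed.

End HomFromAut.

End Automorphisms.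

Arguments conj_aut {X}.
Arguments aut_of_bij_hom {X f}.
Arguments autf_hom {X}.
Arguments autf_mul {X}.
Arguments autfK {X}.
Arguments hom_aut_kills_inner {X Y phi} hphi HsX {k}.
Arguments hom_aut_inj_of_inner {X Y phi} hphi HsX {b}.
Arguments hom_aut_kills_inner_or_inj {X Y phi}.

Definition unique_extension {X Y : Group} (i : X -> Y) (phi : X -> Y) : Prop :=
  exists psi : Y -> Y, is_hom psi /\ (forall x, psi (i x) = phi x) /\
    forall psi' : Y -> Y, is_hom psi' -> (forall x, psi' (i x) = phi x) ->
      forall y, psi' y = psi y.

Lemma localization_split (X Y : Group) (i : Aut X -> Y) :
  simple_group X ->
  localization i <->
  (forall phi, is_hom phi -> inj phi -> unique_extension i phi) /\
  (forall phi, is_hom phi -> (forall a, inner a -> phi a = gone) ->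
     unique_extension i phi).
Proof.
  intro HsX. split.
  - intro L. split; intros phi hphi _; exact (L phi hphi).
  - intros [Linj Lkill] phi hphi.
    destruct (hom_aut_kills_inner_or_inj hphi HsX) as [Hkill | Hinj].
    + exact (Lkill phi hphi Hkill).
    + exact (Linj phi hphi Hinj).
Qed.

Section Localization.
Variables H G : Group.
Hypothesis HsG : simple_group G.
Variable j : Aut H -> Aut G.
Hypotheses (Hj : is_hom j) (Hjinj : inj j) (HjInn : forall a, inner a -> inner (j a)).
Variable a0 : Aut H.
Hypotheses (Ha0 : inner a0) (Ha0ne : a0 <> gone).

Lemma extension_kills_inner (Y : Group) (psi : Aut G -> Y) :
  is_hom psi -> psi (j a0) = gone -> forall b, inner b -> psi b = gone.
Proof.
  intros hpsi E. apply (hom_aut_kills_inner hpsi HsG E).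
  exact (inj_hom_neq1 Hj Hjinj Ha0ne).
Qed.

Section InjectiveExtensions.
Hypothesis Hcoh : cohopfian (Aut G).

Lemma extension_of_inj_is_aut (psi : Aut G -> Aut G) :
  is_hom psi -> inj (fun a => psi (j a)) ->
  exists th : Aut (Aut G), forall y, autf th y = psi y.
Proof.
  intros hpsi ipsij.
  assert (ipsi : inj psi).
  { apply (hom_aut_inj_of_inner hpsi HsG (HjInn a0 Ha0)).
    refine (inj_hom_neq1 _ ipsij Ha0ne). intros x y. rewrite Hj. apply hpsi. }
  exact (aut_of_bij_hom hpsi ipsi (Hcoh psi hpsi ipsi)).
Qed.

Lemma unique_extension_inj_iff :
  (forall phi, is_hom phi -> inj phi -> unique_extension j phi) <->
  (forall kappa : Aut H -> Aut G, is_hom kappa -> inj kappa ->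
     exists theta : Aut (Aut G), forall a, autf theta (j a) = kappa a) /\
  (forall theta : Aut (Aut G), (forall a, autf theta (j a) = j a) -> theta = gone).
Proof.
  split.
  - intro Uinj. split.
    + intros kappa hkappa ikappa.
      destruct (Uinj kappa hkappa ikappa) as [psi [hpsi [psij _]]].
      assert (ipsij : inj (fun a => psi (j a))).
      { intros x y. rewrite !psij. apply ikappa. }
      destruct (extension_of_inj_is_aut _ hpsi ipsij) as [th Hth].
      exists th. intro a. rewrite Hth. apply psij.
    + intros th Hth.
      destruct (Uinj j Hj Hjinj) as [psi [_ [_ psi_unique]]].
      apply aut_eq. intro y.
      rewrite (psi_unique _ (autf_hom th) Hth y).
      symmetry. apply (psi_unique (fun x => x)); [intros ? ?|]; reflexivity.
  - intros [Ha Hb] phi hphi iphi.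
    destruct (Ha phi hphi iphi) as [th Hth].
    exists (autf th). split; [apply autf_hom | split; [exact Hth|]].
    intros psi hpsi psij y.
    assert (ipsij : inj (fun a => psi (j a))).
    { intros x z. rewrite !psij. apply iphi. }
    destruct (extension_of_inj_is_aut _ hpsi ipsij) as [th' Hth'].
    assert (E : gmul (ginv th) th' = gone).
    { apply Hb. intro a. rewrite autf_mul, Hth', psij, <- Hth. apply autfK. }
    assert (th' = th) by (apply (mulg_cancel_l (ginv th)); rewrite E, gmulVl; reflexivity).
    subst th'. rewrite <- Hth'. reflexivity.
Qed.

End InjectiveExtensions.

Section ExtensionsThroughOut.
Variables (OutH : Group) (qH : Aut H -> OutH).
Hypothesis sqH : surj qH.
Variables (OutG : Group) (qG : Aut G -> OutG).
Hypothesis HqG : quotient_map qG inner.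
Variables (Q : Group) (qN : Aut H -> Q).
Hypothesis HqN : quotient_map qN (fun a => inner (j a)).
Variable k : OutH -> OutG.
Hypothesis Hkj : forall a, k (qH a) = qG (j a).
Variable pi : OutH -> Q.
Hypothesis Hpiq : forall a, pi (qH a) = qN a.

Lemma extension_factors_through_Out (Y : Group) (psi : Aut G -> Y) :
  is_hom psi -> psi (j a0) = gone ->
  exists chi : OutG -> Y, is_hom chi /\ forall y, chi (qG y) = psi y.
Proof.
  intros hpsi E. exact (quotient_factor HqG hpsi (extension_kills_inner _ _ hpsi E)).
Qed.

Lemma induced_extension_iff (chi : OutG -> Aut G) (phi' : Q -> Aut G) :
  (forall o, chi (k o) = phi' (pi o)) <-> (forall a, chi (qG (j a)) = phi' (qN a)).
Proof.
  split.
  - intros E a. rewrite <- Hkj, <- Hpiq. apply E.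
  - intros E o. destruct (sqH o) as [a <-]. rewrite Hkj, Hpiq. apply E.
Qed.

Lemma unique_extension_kill_iff :
  (forall phi, is_hom phi -> (forall a, inner a -> phi a = gone) ->
     unique_extension j phi) <->
  (forall phi' : Q -> Aut G, is_hom phi' ->
     exists psi' : OutG -> Aut G, is_hom psi' /\
       (forall o, psi' (k o) = phi' (pi o)) /\
       (forall psi'' : OutG -> Aut G, is_hom psi'' ->
          (forall o, psi'' (k o) = phi' (pi o)) -> forall y, psi'' y = psi' y)) /\
  (forall phi : Aut H -> Aut G, is_hom phi ->
     (forall a, inner a -> phi a = gone) ->
     forall a, inner (j a) -> phi a = gone).
Proof.
  destruct HqG as [hqG [sqG _]]. destruct HqN as [hqN [_ kqN]].
  split.
  - intro Ukill. split.
    + intros phi' hphi'.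
      assert (hphi : is_hom (fun a => phi' (qN a))).
      { intros x y. rewrite hqN. apply hphi'. }
      assert (phi_inner : forall a, inner a -> phi' (qN a) = gone).
      { intros a Ha. rewrite (proj2 (kqN a) (HjInn a Ha)). apply (hom_one hphi'). }
      destruct (Ukill _ hphi phi_inner) as [psi [hpsi [psij psi_unique]]].
      destruct (extension_factors_through_Out _ _ hpsi) as [psi' [hpsi' Hpsi']].
      { rewrite psij. exact (phi_inner a0 Ha0). }
      exists psi'. split; [exact hpsi'|split].
      * apply induced_extension_iff. intro a. rewrite Hpsi'. apply psij.
      * intros psi'' hpsi'' E y. destruct (sqG y) as [g <-]. rewrite Hpsi'.
        apply (psi_unique (fun g => psi'' (qG g))).
        -- intros x z. rewrite hqG. apply hpsi''.
        -- exact (proj1 (induced_extension_iff psi'' phi') E).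
    + intros phi hphi phi_inner a Ha.
      destruct (Ukill phi hphi phi_inner) as [psi [hpsi [psij _]]].
      rewrite <- psij. apply (extension_kills_inner _ _ hpsi); [|exact Ha].
      rewrite psij. exact (phi_inner a0 Ha0).
  - intros [Hc Hd] phi hphi phi_inner.
    destruct (quotient_factor HqN hphi (Hd phi hphi phi_inner)) as [phi' [hphi' Hphi']].
    destruct (Hc phi' hphi') as [psi' [hpsi' [psi'k psi'_unique]]].
    exists (fun g => psi' (qG g)). split; [|split].
    + intros x y. rewrite hqG. apply hpsi'.
    + intro a. rewrite <- Hphi'. exact (proj1 (induced_extension_iff psi' phi') psi'k a).
    + intros psi hpsi psij y.
      destruct (extension_factors_through_Out _ _ hpsi) as [chi [hchi Hchi]].
      { rewrite psij. exact (phi_inner a0 Ha0). }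
      rewrite <- Hchi. apply psi'_unique; [exact hchi|].
      apply induced_extension_iff. intro a. rewrite Hchi, psij. symmetry. apply Hphi'.
Qed.

End ExtensionsThroughOut.

End Localization.

Theorem theorem3p3
  (H G : Group)
  (HsH : simple_group H) (HnH : nonabelian H)
  (HsG : simple_group G) (HnG : nonabelian G)
  (j : Aut H -> Aut G) (Hj : is_hom j) (Hjinj : inj j)
  (HjInn : forall a : Aut H, inner a -> inner (j a))
  (Hcoh : cohopfian (Aut G))
  (* Out(H), Out(G) and Aut(H)/N, each given by a quotient map *)
  (OutH : Group) (qH : Aut H -> OutH) (HqH : quotient_map qH inner)
  (OutG : Group) (qG : Aut G -> OutG) (HqG : quotient_map qG inner)
  (Q : Group) (qN : Aut H -> Q) (HqN : quotient_map qN (fun a => inner (j a)))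
  (Hhyp : hyperabelian OutG)
  (* k : Out(H) -> Out(G) induced by j *)
  (k : OutH -> OutG) (Hk : is_hom k) (Hkj : forall a, k (qH a) = qG (j a))
  (* pi : Out(H) -> Aut(H)/N canonical projection *)
  (pi : OutH -> Q) (Hpi : is_hom pi) (Hpiq : forall a, pi (qH a) = qN a) :
  localization j <->
  ((* (a) *)
   (forall kappa : Aut H -> Aut G, is_hom kappa -> inj kappa ->
      exists theta : Aut (Aut G), forall a, autf theta (j a) = kappa a) /\
   (* (b) *)
   (forall theta : Aut (Aut G), (forall a, autf theta (j a) = j a) ->
      theta = gone) /\
   (* (c) *)
   (forall phi' : Q -> Aut G, is_hom phi' ->
      exists psi' : OutG -> Aut G, is_hom psi' /\
        (forall o, psi' (k o) = phi' (pi o)) /\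
        (forall psi'' : OutG -> Aut G, is_hom psi'' ->
           (forall o, psi'' (k o) = phi' (pi o)) -> forall y, psi'' y = psi' y)) /\
   (* (d) *)
   (forall phi : Aut H -> Aut G, is_hom phi ->
      (forall a, inner a -> phi a = gone) ->
      forall a, inner (j a) -> phi a = gone)).
Proof.
  destruct (nonabelian_inner_nontrivial _ HnH) as [a0 [Ha0 Ha0ne]].
  pose proof (unique_extension_inj_iff _ _ HsG _ Hj Hjinj HjInn _ Ha0 Ha0ne Hcoh)
    as Ainj.
  pose proof (unique_extension_kill_iff _ _ HsG _ Hj Hjinj HjInn _ Ha0 Ha0ne
                _ _ (proj1 (proj2 HqH)) _ _ HqG _ _ HqN _ Hkj _ Hpiq) as Akill.
  rewrite (localization_split _ _ j HsH), Ainj, Akill.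
  tauto.
Qed.
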